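(* Let $R$ be a commutative Noetherian ring and $n$ a non-negative integer. The class of $R$-modules that are in dimension $<n$ is a Serre subcategory of the category of $R$-modules, i.e. it is closed under taking submodules, quotients and extensions.
   Context: For an $R$-module $L$, $\dim\operatorname{Supp}L=\sup\{\dim R/\mathfrak p:\mathfrak p\in\operatorname{Supp}L\}$, the zero module having dimension $-\infty$. An $R$-module $L$ is ''in dimension $<n$'' if there is a finitely generated submodule $N\subseteq L$ with $\dim\operatorname{Supp}(L/N)<n$. *)

From HB Require Import structures.
From mathcomp Require Import all_boot all_order all_algebra.
Set Implicit Arguments. Unset Strict Implicit. Unset Printing Implicit Defensive.
Import GRing.Theory.
Local Open Scope ring_scope.

Definition ideal_span (R : comPzRingType) (s : seq R) : R -> Prop :=
  fun x => exists c : 'I_(size s) -> R, x = \sum_(i < size s) c i * s`_(val i).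

Definition is_ideal (R : comPzRingType) (I : R -> Prop) : Prop :=
  [/\ I 0, (forall x y, I x -> I y -> I (x + y)) & (forall r x, I x -> I (r * x))].

Definition noetherian_ring (R : comPzRingType) : Prop :=
  forall I : R -> Prop, is_ideal I ->
    exists s : seq R, forall x, I x <-> ideal_span s x.

Definition is_prime_ideal (R : comPzRingType) (P : R -> Prop) : Prop :=
  [/\ is_ideal P, ~ P 1 & (forall x y, P (x * y) -> P x \/ P y)].

Definition strict_subset (R : comPzRingType) (P Q : R -> Prop) : Prop :=
  (forall x, P x -> Q x) /\ exists x, Q x /\ ~ P x.

(* dim R/p >= k : there is a chain of primes p = q_0 ⊊ q_1 ⊊ ... ⊊ q_k. *)
Definition dim_quot_ge (R : comPzRingType) (p : R -> Prop) (k : nat) : Prop :=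
  exists q : nat -> (R -> Prop),
    (forall x, q 0%N x <-> p x) /\
    (forall i, (i <= k)%N -> is_prime_ideal (q i)) /\
    (forall i, (i < k)%N -> strict_subset (q i) (q i.+1)).

Definition mod_span (R : comPzRingType) (M : lmodType R) (s : seq M) : M -> Prop :=
  fun x => exists c : 'I_(size s) -> R, x = \sum_(i < size s) c i *: s`_(val i).

(* p ∈ Supp (M/N), with N = span s:  (M/N)_p <> 0, i.e. some x + N has nonzero
   image in the localization: for every t ∉ p, t x ∉ N. *)
Definition in_supp_quot (R : comPzRingType) (M : lmodType R) (s : seq M)
    (p : R -> Prop) : Prop :=
  exists x : M, forall t : R, ~ p t -> ~ mod_span s (t *: x).

(* M is in dimension < n : there is a finitely generated submodule N ⊆ M with
   dim Supp (M/N) < n, i.e. dim R/p < n for every p ∈ Supp (M/N). *)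
Definition in_dim_lt (R : comPzRingType) (n : nat) (M : lmodType R) : Prop :=
  exists s : seq M, forall p : R -> Prop, is_prime_ideal p ->
    in_supp_quot s p -> ~ dim_quot_ge p n.

From HB Require Import structures.
From mathcomp Require Import all_boot all_order all_algebra.
From Stdlib Require Import Classical.
Set Implicit Arguments. Unset Strict Implicit. Unset Printing Implicit Defensive.
Import GRing.Theory.
Local Open Scope ring_scope.

(* A submodule of a finitely generated module over a Noetherian ring is
   finitely generated: induct on the number of generators, the coefficients
   of the first generator forming a finitely generated ideal.  Now let
   0 -> M' -> M -> M'' -> 0 be exact and N ⊆ M finitely generated.  Then
   N ∩ M' is finitely generated with Supp (M'/(N ∩ M')) ⊆ Supp (M/N), and
   Supp (M''/g N) ⊆ Supp (M/N).  Conversely, if N' ⊆ M' and N ⊆ M lifts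
   N'' ⊆ M'', exactness of localization gives
   Supp (M/(f N' + N)) ⊆ Supp (M'/N') ∪ Supp (M''/N''). *)

Lemma exists_map_preimage (T : Type) (U : eqType) (g : T -> U) (s : seq U) :
  (forall z, z \in s -> exists y, g y = z) -> exists t, map g t = s.
Proof.
elim: s => [|a s IH] gs; first by exists [::].
have [y <-] := gs a (mem_head a s).
have [t <-] : exists t, map g t = s by apply: IH => z zs; apply: gs; rewrite in_cons zs orbT.
by exists (y :: t).
Qed.

Section Spans.
Variables (R : comPzRingType) (M : lmodType R).
Implicit Types (x y : M) (s : seq M) (P Q : M -> Prop).

Definition is_submodule P :=
  [/\ P 0, forall x y, P x -> P y -> P (x + y) & forall r x, P x -> P (r *: x)].

Definition finitely_generated P := exists s, forall x, P x <-> mod_span s x.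

Lemma is_submoduleB P x y : is_submodule P -> P x -> P y -> P (x - y).
Proof. by case=> _ PD PZ Px Py; apply: PD => //; rewrite -scaleN1r; apply: PZ. Qed.

Lemma is_submoduleI P Q :
  is_submodule P -> is_submodule Q -> is_submodule (fun x => P x /\ Q x).
Proof.
case=> P0 PD PZ [Q0 QD QZ]; split=> //.
- by move=> x y [Px Qx] [Py Qy]; split; [apply: PD | apply: QD].
- by move=> r x [Px Qx]; split; [apply: PZ | apply: QZ].
Qed.

Lemma mod_span_nil x : mod_span [::] x <-> x = 0.
Proof.
split; first by case=> c ->; rewrite big_ord0.
by move=> ->; exists (fun _ => 0); rewrite big_ord0.
Qed.

Lemma mod_span_cons a s x :
  mod_span (a :: s) x <-> exists c y, mod_span s y /\ x = c *: a + y.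
Proof.
split=> [[c ->] | [c [y [[d ->] ->]]]].
  rewrite big_ord_recl /=; exists (c ord0), (\sum_(i < size s) c (lift ord0 i) *: s`_i).
  by split=> //; exists (fun i => c (lift ord0 i)).
exists (fun i : 'I_(size s).+1 => if unlift ord0 i is Some j then d j else c).
rewrite big_ord_recl /= unlift_none; congr (_ + _).
by apply: eq_bigr => i _; rewrite liftK.
Qed.

Lemma mod_span_submodule s : is_submodule (mod_span s).
Proof.
elim: s => [|a s [S0 SD SZ]].
  split; first exact/mod_span_nil.
  - by move=> x y /mod_span_nil -> /mod_span_nil ->; apply/mod_span_nil; rewrite addr0.
  - by move=> r x /mod_span_nil ->; apply/mod_span_nil; rewrite scaler0.
split.
- by apply/mod_span_cons; exists 0, 0; rewrite scale0r addr0.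
- move=> x y /mod_span_cons [c [u [Hu ->]]] /mod_span_cons [d [v [Hv ->]]].
  apply/mod_span_cons; exists (c + d), (u + v); split; first exact: SD.
  by rewrite scalerDl addrACA.
- move=> r x /mod_span_cons [c [u [Hu ->]]]; apply/mod_span_cons.
  exists (r * c), (r *: u); split; first exact: SZ.
  by rewrite scalerDr scalerA.
Qed.

Lemma mod_span_head a s : mod_span (a :: s) a.
Proof.
apply/mod_span_cons; exists 1, 0; rewrite scale1r addr0; split=> //.
by case: (mod_span_submodule s).
Qed.

Lemma mod_span_behead a s x : mod_span s x -> mod_span (a :: s) x.
Proof. by move=> Hx; apply/mod_span_cons; exists 0, x; rewrite scale0r add0r. Qed.

Lemma mod_span_mem s x : x \in s -> mod_span s x.
Proof.
elim: s => //= a s IH; rewrite in_cons => /orP [/eqP -> | /IH].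
  exact: mod_span_head.
exact: mod_span_behead.
Qed.

Lemma mod_span_cat s1 s2 x :
  mod_span (s1 ++ s2) x <-> exists y1 y2, mod_span s1 y1 /\ mod_span s2 y2 /\ x = y1 + y2.
Proof.
elim: s1 x => [|a s1 IH] x /=.
  split=> [Hx | [y1 [y2 [/mod_span_nil -> [Hy2 ->]]]]]; last by rewrite add0r.
  by exists 0, x; rewrite add0r; split=> //; apply/mod_span_nil.
split=> [/mod_span_cons [c [y [/IH [y1 [y2 [Hy1 [Hy2 ->]]]] ->]]] |].
  exists (c *: a + y1), y2; rewrite addrA; split=> //.
  by apply/mod_span_cons; exists c, y1.
case=> y1 [y2 [/mod_span_cons [c [y [Hy ->]]] [Hy2 ->]]].
apply/mod_span_cons; exists c, (y + y2); rewrite addrA; split=> //.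
by apply/IH; exists y, y2.
Qed.

End Spans.

Lemma ideal_spanE (R : comPzRingType) (s : seq R) r :
  ideal_span s r <-> @mod_span R R^o s r.
Proof. by []. Qed.

Section LinearImages.
Variables (R : comPzRingType) (M N : lmodType R) (g : {linear M -> N}).

Lemma is_submodule_image : is_submodule (fun y => exists x, g x = y).
Proof.
split; first by exists 0; rewrite linear0.
- by move=> _ _ [x <-] [y <-]; exists (x + y); rewrite linearD.
- by move=> r _ [x <-]; exists (r *: x); rewrite linearZ.
Qed.

Lemma mod_span_map s z : mod_span (map g s) z <-> exists2 y, mod_span s y & g y = z.
Proof.
elim: s z => [|a s IH] z /=.
  split=> [/mod_span_nil -> | [y /mod_span_nil -> <-]]; last by apply/mod_span_nil; rewrite linear0.
  by exists 0; [apply/mod_span_nil | rewrite linear0].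
split=> [/mod_span_cons [c [y [/IH [x Hx <-] ->]]] | [y /mod_span_cons [c [x [Hx ->]]] <-]].
  by exists (c *: a + x); [apply/mod_span_cons; exists c, x | rewrite linearD linearZ].
apply/mod_span_cons; exists c, (g x); rewrite linearD linearZ; split=> //.
by apply/IH; exists x.
Qed.

End LinearImages.

Section Noetherian.
Variables (R : comPzRingType) (M : lmodType R).
Implicit Types (x : M) (s : seq M) (P : M -> Prop).

Definition coef_ideal P a s : R -> Prop :=
  fun r => exists2 y, P y & mod_span s (y - r *: a).

Lemma coef_ideal_is_ideal P a s : is_submodule P -> is_ideal (coef_ideal P a s).
Proof.
case=> P0 PD PZ; have [S0 SD SZ] := mod_span_submodule s; split.
- by exists 0; rewrite ?scale0r ?subr0.
- move=> r1 r2 [y1 Py1 Hy1] [y2 Py2 Hy2]; exists (y1 + y2); first exact: PD.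
  by rewrite scalerDl opprD addrACA; apply: SD.
- move=> r x [y Py Hy]; exists (r *: y); first exact: PZ.
  by rewrite -scalerA -scalerBr; apply: SZ.
Qed.

Lemma coef_ideal_lift P a s rs : is_submodule P ->
    (forall r, ideal_span rs r -> coef_ideal P a s r) ->
  exists ys, (forall z, mod_span ys z -> P z) /\
    forall r, ideal_span rs r -> exists2 z, mod_span ys z & mod_span s (z - r *: a).
Proof.
move=> [P0 PD PZ]; have [S0 SD SZ] := mod_span_submodule s.
elim: rs => [|r0 rs IH] rsI.
  exists [::]; split=> [z /mod_span_nil -> // | r /ideal_spanE /mod_span_nil ->].
  by exists 0; [apply/mod_span_nil | rewrite scale0r subr0].
have [y0 Py0 Hy0] : coef_ideal P a s r0 by apply/rsI/ideal_spanE/mod_span_head.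
have [ys [ysP ysI]] := IH (fun r Hr => rsI r (@mod_span_behead _ R^o r0 rs r Hr)).
exists (y0 :: ys); split.
  by move=> z /mod_span_cons [c [z' [Hz' ->]]]; apply: PD; [apply: PZ | apply: ysP].
move=> r /ideal_spanE /mod_span_cons [c [r' [/ideal_spanE /ysI [z Hz Hz'] ->]]].
exists (c *: y0 + z); first by apply/mod_span_cons; exists c, z.
have -> : c *: y0 + z - (c *: (r0 : R^o) + r') *: a = c *: (y0 - r0 *: a) + (z - r' *: a).
  rewrite scalerDl scalerBr; change ((c *: (r0 : R^o)) : R) with (c * r0).
  by rewrite -scalerA opprD addrACA.
by apply: SD => //; apply: SZ.
Qed.

Lemma noetherian_submodule_fg s P : noetherian_ring R ->
  is_submodule P -> (forall x, P x -> mod_span s x) -> finitely_generated P.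
Proof.
move=> hR; elim: s P => [|a s IH] P HP Ps.
  exists [::] => x; split=> [/Ps // | /mod_span_nil ->]; by case: HP.
have [P0 PD PZ] := HP.
have [rs Irs] := hR _ (coef_ideal_is_ideal a s HP).
have [ys [ysP ysI]] := coef_ideal_lift HP (fun r => proj2 (Irs r)).
have [s' Hs'] := IH _ (is_submoduleI HP (mod_span_submodule s)) (fun _ => @proj2 _ _).
exists (ys ++ s') => x; split=> [Px | /mod_span_cat [z [y [Hz [/Hs' [Py _] ->]]]]]; last first.
  by apply: PD => //; apply: ysP.
have /mod_span_cons [c [y [Hy Ex]]] := Ps x Px.
have [z Hz Hzc] : exists2 z, mod_span ys z & mod_span s (z - c *: a).
  by apply/ysI/Irs; exists x; rewrite // Ex [c *: a + y]addrC addrK.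
apply/mod_span_cat; exists z, (x - z); split=> //; split; last by rewrite addrC subrK.
apply/Hs'; split; first exact: is_submoduleB (ysP _ Hz).
have -> : x - z = y - (z - c *: a) by rewrite Ex opprB addrCA addrA.
exact: is_submoduleB (mod_span_submodule s) Hy Hzc.
Qed.

End Noetherian.

Section Support.
Variables (R : comPzRingType) (p : R -> Prop).

Lemma not_in_supp_quotP (M : lmodType R) (s : seq M) :
  ~ in_supp_quot s p <-> forall x, exists2 t, ~ p t & mod_span s (t *: x).
Proof.
split=> [Hs x | Hs [x Hx]]; last by have [t nt] := Hs x; apply: Hx.
by apply: NNPP => nHx; apply: Hs; exists x => t nt Ht; apply: nHx; exists t.
Qed.

Lemma in_supp_quot_comap (M' M : lmodType R) (f : {linear M' -> M}) s s' :
  (forall x, mod_span s (f x) -> mod_span s' x) -> in_supp_quot s' p -> in_supp_quot s p.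
Proof. by move=> fs [x Hx]; exists (f x) => t nt; rewrite -linearZ => /fs; apply: Hx. Qed.

Lemma in_supp_quot_map (M M'' : lmodType R) (g : {linear M -> M''}) s :
  (forall z, exists y, g y = z) -> in_supp_quot (map g s) p -> in_supp_quot s p.
Proof.
move=> gsurj [z Hz]; have [y gy] := gsurj z; exists y => t nt Hy.
by apply: (Hz t nt); apply/mod_span_map; exists (t *: y); rewrite // linearZ gy.
Qed.

(* Exactness of localization at [p] in the middle of M' -> M -> M''. *)
Lemma in_supp_quot_ext (M' M M'' : lmodType R)
    (f : {linear M' -> M}) (g : {linear M -> M''}) s' s :
  is_prime_ideal p -> (forall y, g y = 0 -> exists x, f x = y) ->
  ~ in_supp_quot s' p -> ~ in_supp_quot (map g s) p -> ~ in_supp_quot (map f s' ++ s) p.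
Proof.
case=> _ _ p_mul kerg /not_in_supp_quotP s'_loc0 /not_in_supp_quotP s_loc0.
apply/not_in_supp_quotP => x.
have [t1 nt1 /mod_span_map [y Hy gy]] := s_loc0 (g x).
have [x' fx'] : exists x', f x' = t1 *: x - y.
  by apply: kerg; rewrite linearB linearZ gy subrr.
have [t2 nt2 Hx'] := s'_loc0 x'.
exists (t2 * t1); first by case/p_mul.
apply/mod_span_cat; exists (f (t2 *: x')), (t2 *: y); split.
  by apply/mod_span_map; exists (t2 *: x').
split; first by case: (mod_span_submodule s) => _ _; apply.
by rewrite linearZ fx' -scalerDr subrK scalerA.
Qed.

End Support.

Section DimensionLessThan.
Variables (R : comPzRingType) (n : nat).

Lemma in_dim_lt_sub (M' M : lmodType R) (f : {linear M' -> M}) :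
  noetherian_ring R -> injective f -> in_dim_lt n M -> in_dim_lt n M'.
Proof.
move=> hR finj [s Hs].
pose Q y := (exists x, f x = y) /\ mod_span s y.
have [s0 Hs0] : finitely_generated Q.
  apply: noetherian_submodule_fg hR _ (fun _ => @proj2 _ _).
  exact: is_submoduleI (is_submodule_image f) (mod_span_submodule s).
have [s' Es'] : exists s', map f s' = s0.
  by apply: exists_map_preimage => z /mod_span_mem /Hs0 [].
exists s' => q q_prime Hq; apply: (Hs q q_prime); apply: (in_supp_quot_comap (f := f)) Hq => x fx.
have /Hs0 : Q (f x) by split=> //; exists x.
by rewrite -Es' => /mod_span_map [y Hy /finj <-].
Qed.

Lemma in_dim_lt_quot (M M'' : lmodType R) (g : {linear M -> M''}) :
  (forall z, exists y, g y = z) -> in_dim_lt n M -> in_dim_lt n M''.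
Proof.
move=> gsurj [s Hs]; exists (map g s) => q q_prime Hq.
exact: Hs q_prime (in_supp_quot_map gsurj Hq).
Qed.

Lemma in_dim_lt_ext (M' M M'' : lmodType R) (f : {linear M' -> M}) (g : {linear M -> M''}) :
  (forall z, exists y, g y = z) -> (forall y, g y = 0 -> exists x, f x = y) ->
  in_dim_lt n M' -> in_dim_lt n M'' -> in_dim_lt n M.
Proof.
move=> gsurj kerg [s' Hs'] [s'' Hs''].
have [s Es] : exists s, map g s = s'' by apply: exists_map_preimage => z _; apply: gsurj.
exists (map f s' ++ s) => q q_prime Hq.
have [Hq' | ns'] := classic (in_supp_quot s' q); first exact: Hs' q_prime Hq'.
have [Hq'' | ns''] := classic (in_supp_quot s'' q); first exact: Hs'' q_prime Hq''.
by rewrite -Es in ns''; case: (in_supp_quot_ext q_prime kerg ns' ns'' Hq).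
Qed.

End DimensionLessThan.

Theorem corollary2p13 (R : comPzRingType) (hR : noetherian_ring R) (n : nat) :
  forall (M' M M'' : lmodType R) (f : {linear M' -> M}) (g : {linear M -> M''}),
    injective f -> (forall z : M'', exists y : M, g y = z) ->
    (forall y : M, (exists x : M', f x = y) <-> g y = 0) ->
    (in_dim_lt n M <-> in_dim_lt n M' /\ in_dim_lt n M'').
Proof.
move=> M' M M'' f g finj gsurj exact_fg; split.
  move=> HM; split; first exact: in_dim_lt_sub hR finj HM.
  exact: in_dim_lt_quot gsurj HM.
case=> HM' HM''; exact: in_dim_lt_ext gsurj (fun y => proj2 (exact_fg y)) HM' HM''.
Qed.
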